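(* $\mathbb{E}_{base}\cup\mathbb{E}_{models}\subsetneq\mathbb{E}_{Büchi}$.
   Context: Fix a finite nonempty $AP$. LTL formulae $\varphi::=\bot\mid p\mid\neg\varphi\mid\varphi\lor\varphi\mid X\varphi\mid\varphi U\varphi$ with standard semantics on traces in $(2^{AP})^\omega$. Kripke structures $M=(S,I,T,\lambda)$ (finite $S$, nonempty initial set $I$, left-total $T$, labelling $\lambda:S\to2^{AP}$); $M\models\varphi$ iff all traces of $M$ satisfy $\varphi$; $\mathrm{Cn}_{LTL}(X)$ = formulae satisfied by every Kripke structure satisfying all formulae of $X$. Büchi automata over $2^{AP}$ (accepting infinite words via runs visiting recurrence states infinitely often), $\mathcal{L}(A)$ the language, $\mathrm{supp}(A):=\{\varphi\mid\pi\models\varphi\ \forall\pi\in\mathcal{L}(A)\}$. Excerpts: $\mathbb{E}_{base}:=\{\mathrm{Cn}_{LTL}(X)\mid X\text{ finite set of LTL formulae}\}$; $\mathbb{E}_{models}:=\{\{\varphi\mid M\models\varphi\text{ for all }M\in X\}\mid X\text{ finite set of Kripke structures}\}$; $\mathbb{E}_{Büchi}:=\{\mathrm{supp}(A)\mid A\text{ a Büchi automaton over }2^{AP}\}$. *)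

From Stdlib Require List.
From mathcomp Require Import all_boot.


Unset Printing Implicit Defensive.

Section LTL.
Variable AP : finType.

Inductive ltl : Type :=
| LBot : ltl
| LAtom : AP -> ltl
| LNeg : ltl -> ltl
| LOr : ltl -> ltl -> ltl
| LNext : ltl -> ltl
| LUntil : ltl -> ltl -> ltl.

Definition trace := nat -> {set AP}.

Fixpoint sat_at (pi : trace) (i : nat) (phi : ltl) : Prop :=
  match phi with
  | LBot => False
  | LAtom p => p \in pi i
  | LNeg f => ~ sat_at pi i f
  | LOr f g => sat_at pi i f \/ sat_at pi i g
  | LNext f => sat_at pi i.+1 f
  | LUntil f g => exists k, i <= k /\ sat_at pi k g /\
                   forall j, i <= j -> j < k -> sat_at pi j f
  end.

Definition sat (pi : trace) (phi : ltl) : Prop := sat_at pi 0 phi.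

Record kripke : Type := Kripke {
  kS : finType;
  kI : {set kS};
  kT : rel kS;
  klab : kS -> {set AP};
  kI_nonempty : kI != set0;
  kT_total : forall s, exists s', kT s s'
}.

Definition ktrace (M : kripke) (pi : trace) : Prop :=
  exists r : nat -> kS M,
    r 0 \in kI M /\ (forall i, kT M (r i) (r i.+1)) /\
    (forall i, pi i = klab M (r i)).

Definition kmodels (M : kripke) (phi : ltl) : Prop :=
  forall pi, ktrace M pi -> sat pi phi.

Definition CnLTL (X : seq ltl) (phi : ltl) : Prop :=
  forall M : kripke, (forall psi, List.In psi X -> kmodels M psi) -> kmodels M phi.

Record buchi : Type := Buchi {
  bQ : finType;
  bInit : {set bQ};
  bDelta : bQ -> {set AP} -> bQ -> bool;
  bAcc : {set bQ}
}.

Definition accepts (A : buchi) (w : trace) : Prop :=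
  exists r : nat -> bQ A,
    r 0 \in bInit A /\ (forall i, bDelta A (r i) (w i) (r i.+1)) /\
    (forall n, exists m, n <= m /\ r m \in bAcc A).

Definition supp (A : buchi) (phi : ltl) : Prop :=
  forall pi, accepts A pi -> sat pi phi.

(* Excerpt families; a set of formulae is a predicate ltl -> Prop,
   membership in a family is up to extensional equality of sets. *)
Definition E_base (E : ltl -> Prop) : Prop :=
  exists X : seq ltl, forall phi, E phi <-> CnLTL X phi.

Definition E_models (E : ltl -> Prop) : Prop :=
  exists X : seq kripke,
    forall phi, E phi <-> (forall M, List.In M X -> kmodels M phi).

Definition E_Buchi (E : ltl -> Prop) : Prop :=
  exists A : buchi, forall phi, E phi <-> supp A phi.

End LTL.
Arguments LBot {AP}.
Arguments E_base {AP}.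
Arguments E_models {AP}.
Arguments E_Buchi {AP}.

From HB Require Import structures.
From mathcomp Require Import all_boot zify boolp.
From Stdlib Require List.

Set Implicit Arguments.
Unset Strict Implicit.
Unset Printing Implicit Defensive.

(* Inclusion: the consequences of a finite set X of formulae are the formulae holding on
   every word of the Hintikka tableau for X, a generalized Buchi automaton (made plain by a
   counter) accepting exactly the models of X.  The two sets agree because the automaton for
   X together with a negated consequence would accept an ultimately periodic word, i.e. a
   trace of a lasso-shaped Kripke structure.  Formulae valid on finitely many Kripke
   structures are those supported by the union of their trace automata.
   Strictness: take the automaton accepting exactly the words with a single occurrence of a
   proposition p, at an even position. *)

Arguments LAtom {AP}.
Arguments LNeg {AP}.
Arguments LOr {AP}.
Arguments LNext {AP}.
Arguments LUntil {AP}.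
Arguments sat_at {AP}.
Arguments sat {AP}.
Arguments ktrace {AP}.
Arguments kmodels {AP}.
Arguments CnLTL {AP}.
Arguments accepts {AP}.
Arguments supp {AP}.
Arguments kS {AP}.
Arguments kI {AP}.
Arguments kT {AP}.
Arguments klab {AP}.
Arguments bQ {AP}.
Arguments bInit {AP}.
Arguments bDelta {AP}.
Arguments bAcc {AP}.

Fixpoint ltl_eqb (AP : finType) (f g : ltl AP) : bool :=
  match f, g with
  | LBot, LBot => true
  | LAtom p, LAtom q => p == q
  | LNeg f, LNeg g | LNext f, LNext g => ltl_eqb f g
  | LOr f1 f2, LOr g1 g2 | LUntil f1 f2, LUntil g1 g2 => ltl_eqb f1 g1 && ltl_eqb f2 g2
  | _, _ => false
  end.

Lemma ltl_eqP (AP : finType) : Equality.axiom (@ltl_eqb AP).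
Proof.
elim=> [|p|f IH|f IHf g IHg|f IH|f IHf g IHg] [|q|f'|f' g'|f'|f' g'] /=;
  try by constructor.
- by apply: (iffP eqP) => [->|[]].
- by apply: (iffP (IH f')) => [->|[]].
- by apply: (iffP andP) => [[/IHf -> /IHg ->]|[<- <-]]; split; [apply/IHf|apply/IHg].
- by apply: (iffP (IH f')) => [->|[]].
- by apply: (iffP andP) => [[/IHf -> /IHg ->]|[<- <-]]; split; [apply/IHf|apply/IHg].
Qed.

HB.instance Definition _ (AP : finType) := hasDecEq.Build (ltl AP) (@ltl_eqP AP).

Lemma In_mem (T : eqType) (x : T) (s : seq T) : List.In x s <-> x \in s.
Proof.
elim: s => [|y s IH] //=; rewrite in_cons; split.
- by case=> [->|/IH ->]; rewrite ?eqxx ?orbT.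
- by case/orP=> [/eqP ->|/IH]; auto.
Qed.

Section Semantics.
Variable AP : finType.
Implicit Types (pi sigma : trace AP) (f g psi : ltl AP) (p : AP).

Lemma sat_ext pi sigma psi : pi =1 sigma -> sat pi psi <-> sat sigma psi.
Proof. by move=> /funext ->. Qed.

Lemma sat_at_untilE pi i f g :
  sat_at pi i (LUntil f g) <->
  sat_at pi i g \/ sat_at pi i f /\ sat_at pi i.+1 (LUntil f g).
Proof.
split.
- move=> [k [ik [gk fk]]]; case: (leqP k i) => [ki|ik'].
    by left; have <- : k = i by lia.
  right; split; first exact: fk.
  by exists k; split=> //; split=> // j ij jk; apply: fk; lia.
- case=> [gi|[fi [k [ik [gk fk]]]]]; first by exists i; split=> //; split=> // j ij ji; lia.
  exists k; split; first lia; split=> // j ij jk.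
  by case: (leqP j i) => [ji|/fk]; [have -> : j = i by lia | apply].
Qed.

Lemma sat_at_shift pi sigma : (forall m, pi m.+1 = sigma m) ->
  forall f i, sat_at pi i.+1 f <-> sat_at sigma i f.
Proof.
move=> shift; elim=> [|q|f IH|f IHf g IHg|f IH|f IHf g IHg] i /=.
- by [].
- by rewrite shift.
- by rewrite IH.
- by rewrite IHf IHg.
- exact: IH.
- split=> [[k [ik [gk fk]]]|[k [ik [gk fk]]]].
  + exists k.-1; have Sk : k = k.-1.+1 by lia.
    split; first lia; split; first by apply/IHg; rewrite -Sk.
    by move=> j ij jk; apply/IHf; apply: fk; lia.
  + exists k.+1; split=> //; split; first exact/IHg.
    move=> j ij jk; have -> : j = j.-1.+1 by lia.
    by apply/IHf; apply: fk; lia.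
Qed.

Fixpoint nextn m f : ltl AP := if m is m'.+1 then LNext (nextn m' f) else f.

Lemma sat_at_nextn pi m f i : sat_at pi i (nextn m f) <-> sat_at pi (i + m) f.
Proof. by elim: m i => [|m IH] i /=; rewrite ?addn0 ?IH ?addSnnS. Qed.

Fixpoint within p m : ltl AP :=
  if m is m'.+1 then LOr (LAtom p) (LNext (within p m')) else LBot.

Lemma sat_at_within pi p m i :
  sat_at pi i (within p m) <-> exists2 k, k < m & p \in pi (i + k).
Proof.
elim: m i => [|m IH] i /=; first by split=> // [[]].
rewrite IH; split.
- case=> [pi_i|[k km pik]]; first by exists 0; rewrite ?addn0.
  by exists k.+1; rewrite -?addSnnS.
- case=> [[|k]] km pik; first by left; rewrite addn0 in pik.
  by right; exists k; rewrite ?addSnnS.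
Qed.

Definition eventually p : ltl AP := LUntil (LNeg LBot) (LAtom p).

Lemma sat_eventually pi p : sat pi (eventually p) <-> exists k, p \in pi k.
Proof.
split=> [[k [_ [pk _]]]|[k pk]]; first by exists k.
by exists k; split=> //; split=> // j _ _ [].
Qed.

End Semantics.

Section LassoPositions.
Variables i j : nat.
Hypothesis ij : i <= j.

(* The positions 0, 1, ..., j, i, i+1, ..., j, i, ... of an ultimately periodic path. *)
Fixpoint lasso m : nat :=
  if m is m'.+1 then (if lasso m' == j then i else (lasso m').+1) else 0.

Lemma lasso_le m : lasso m <= j.
Proof. by elim: m => [|m IH] //=; case: eqP => // ?; lia. Qed.

Lemma lasso_small m : m <= j -> lasso m = m.
Proof. by elim: m => [|m IH] //= Sm; rewrite IH; [case: eqP => //; lia | lia]. Qed.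

Lemma lasso_rel (R : rel nat) :
  (forall k, R k k.+1) -> R j i -> forall m, R (lasso m) (lasso m.+1).
Proof. by move=> RS Rji m /=; case: eqP => [->|]. Qed.

Lemma lasso_period t : lasso (i + t + (j.+1 - i)) = lasso (i + t).
Proof.
elim: t => [|t IH].
  rewrite addn0 (lasso_small ij) (_ : i + _ = j.+1); last lia.
  by rewrite /= lasso_small // eqxx.
by rewrite (_ : i + t.+1 + _ = (i + t + (j.+1 - i)).+1) ?addnS /= ?IH //; lia.
Qed.

Lemma lasso_returns n : exists2 m, n <= m & lasso m = i.
Proof.
have loop q : lasso (i + q * (j.+1 - i)) = i.
  elim: q => [|q IH]; first by rewrite addn0 lasso_small.
  rewrite mulSn (_ : i + _ = i + q * (j.+1 - i) + (j.+1 - i)); last lia.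
  by rewrite lasso_period.
exists (i + n * (j.+1 - i)); last exact: loop.
by have := leq_pmulr n (_ : 0 < j.+1 - i); lia.
Qed.

End LassoPositions.

Lemma lasso_diag j m : lasso j j m = minn m j.
Proof. by elim: m => [|m IH] /=; rewrite ?min0n // IH; case: eqP; lia. Qed.

Lemma pigeonhole_nat (S : finType) (r : nat -> S) :
  exists a b, a < b <= #|S| /\ r a = r b.
Proof.
pose f (k : 'I_#|S|.+1) := r k.
have [f_inj|/injectivePn [x [y xy fxy]]] := boolP (injectiveb f).
  by have := leq_card f (injectiveP _ f_inj); rewrite card_ord ltnn.
have [xy'|yx|/val_inj eq_xy] := ltngtP x y; last by rewrite eq_xy eqxx in xy.
- by exists x, y; rewrite xy' -ltnS ltn_ord.
- by exists y, x; rewrite yx -ltnS ltn_ord.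
Qed.

Lemma infinitely_often_enum (P : nat -> Prop) :
  (forall n, exists m, n <= m /\ P m) ->
  exists q : nat -> nat, {homo q : a b / a < b} /\ forall k, P (q k).
Proof.
move=> infP; pose next n := sval (cid (infP n)).
have nextP n : n <= next n /\ P (next n) := svalP (cid (infP n)).
pose q := fix q k := if k is k'.+1 then next (q k').+1 else next 0.
exists q; split; last by case=> [|k]; apply: (nextP _).2.
exact: homo_ltn ltn_trans (fun k => (nextP _).1).
Qed.

Section Lassos.
Variable AP : finType.
Implicit Types (pi : trace AP) (psi : ltl AP).

Section LassoKripke.
Variables (i j : nat) (ij : i <= j) (lab : nat -> {set AP}).

Definition lasso_next : rel 'I_j.+1 :=
  fun a b => val b == (if val a == j then i else (val a).+1).

Lemma lasso_init_neq0 : [set @ord0 j] != set0.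
Proof. by apply/set0Pn; exists ord0; rewrite inE. Qed.

Lemma lasso_next_total a : exists b, lasso_next a b.
Proof.
exists (inord (if val a == j then i else (val a).+1)).
by rewrite /lasso_next /= inordK //; case: eqP => // ?; have := ltn_ord a; lia.
Qed.

Definition lasso_kripke : kripke AP :=
  @Kripke AP _ _ _ (fun a => lab (val a)) lasso_init_neq0 lasso_next_total.

Lemma ktrace_lasso_kripke pi : ktrace lasso_kripke pi <-> pi =1 lab \o lasso i j.
Proof.
split=> [[r [r0 [run lab_r]]] m|pi_lab].
  rewrite lab_r /=; congr lab.
  elim: m => [|m IH] /=; first by move: r0; rewrite inE => /eqP ->.
  by rewrite -IH; apply/eqP: (run m).
have lasso_lt m : lasso i j m < j.+1 by rewrite ltnS lasso_le.
exists (fun m => inord (lasso i j m)); split; [|split].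
- by rewrite inE; apply/eqP/val_inj; rewrite /= inordK.
- by move=> m; rewrite /= /lasso_next /= !inordK //; exact: (lasso_lt m.+1).
- by move=> m; rewrite pi_lab /= inordK.
Qed.

Lemma kmodels_lasso_kripke psi : kmodels lasso_kripke psi <-> sat (lab \o lasso i j) psi.
Proof.
split=> [|sat_lab pi /ktrace_lasso_kripke pi_lab]; first by apply; apply/ktrace_lasso_kripke.
exact/(sat_ext psi pi_lab).
Qed.

End LassoKripke.

Lemma accepts_lasso (A : buchi AP) pi : accepts A pi ->
  exists i j, i <= j /\ accepts A (pi \o lasso i j).
Proof.
move=> [r [r0 [run acc]]].
have [q [q_incr q_acc]] := infinitely_often_enum acc.
have [a [b [/andP [ab _] /= rqab]]] := pigeonhole_nat (r \o q).
have qab := q_incr _ _ ab.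
have ij : q a <= (q b).-1 by lia.
exists (q a), (q b).-1; split=> //.
exists (r \o lasso (q a) (q b).-1); split; [exact: r0|split].
- apply: (lasso_rel (R := fun k l => bDelta A (r k) (pi k) (r l))) => //.
  by have := run (q b).-1; rewrite (_ : (q b).-1.+1 = q b) ?rqab //; lia.
- move=> n; have [m nm lasso_m] := lasso_returns ij n.
  by exists m; rewrite /= lasso_m.
Qed.

Lemma ktrace_lasso (M : kripke AP) pi : ktrace M pi ->
  exists a b, a <= b < #|kS M| /\ ktrace M (pi \o lasso a b).
Proof.
move=> [r [r0 [run lab_r]]].
have [a [b [/andP [ab bS] rab]]] := pigeonhole_nat r.
exists a, b.-1; split; first lia.
exists (r \o lasso a b.-1); split; [exact: r0|split; last by move=> m; rewrite /= lab_r].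
apply: (lasso_rel (R := fun k l => kT M (r k) (r l))) => //.
by have := run b.-1; rewrite (_ : b.-1.+1 = b) ?rab //; lia.
Qed.

Lemma kmodels_within (M : kripke AP) p :
  kmodels M (eventually p) -> kmodels M (within p #|kS M|).
Proof.
move=> evM pi /ktrace_lasso [a [b [/andP [ab bS] tr]]].
have /sat_eventually [k pk] := evM _ tr.
apply/sat_at_within; exists (lasso a b k); last by rewrite add0n.
by have := lasso_le ab k; lia.
Qed.

End Lassos.

Section Closure.
Variable AP : finType.
Implicit Types (f g psi : ltl AP) (Y : seq (ltl AP)).

Fixpoint subformulas psi : seq (ltl AP) :=
  psi :: match psi with
         | LBot | LAtom _ => [::]
         | LNeg f | LNext f => subformulas f
         | LOr f g | LUntil f g => subformulas f ++ subformulas g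
         end.

Lemma subformulas_refl psi : psi \in subformulas psi.
Proof. by case: psi => *; rewrite inE eqxx. Qed.

Lemma subformulas_trans psi f :
  f \in subformulas psi -> {subset subformulas f <= subformulas psi}.
Proof.
elim: psi => [|p|g IH|g1 IH1 g2 IH2|g IH|g1 IH1 g2 IH2] /=;
  rewrite in_cons => /orP [/eqP ->|] //;
  rewrite ?in_nil ?mem_cat // => fg x xf; rewrite in_cons ?mem_cat.
- by rewrite (IH fg x xf) orbT.
- by case/orP: fg => fg; rewrite ?(IH1 fg x xf) ?(IH2 fg x xf) ?orbT.
- by rewrite (IH fg x xf) orbT.
- by case/orP: fg => fg; rewrite ?(IH1 fg x xf) ?(IH2 fg x xf) ?orbT.
Qed.

Definition closure Y : seq (ltl AP) := flatten (map subformulas Y).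

Lemma closure_subformulas Y psi f :
  psi \in closure Y -> f \in subformulas psi -> f \in closure Y.
Proof.
move=> /flattenP [_ /mapP [chi chi_Y ->] psi_chi] f_psi.
apply/flattenP; exists (subformulas chi); first exact: map_f.
exact: subformulas_trans f_psi.
Qed.

Lemma mem_closure Y psi : psi \in Y -> psi \in closure Y.
Proof.
by move=> psi_Y; apply/flattenP; exists (subformulas psi); rewrite ?map_f ?subformulas_refl.
Qed.

Lemma closure_neg Y f : LNeg f \in closure Y -> f \in closure Y.
Proof. by move/closure_subformulas; apply; rewrite /= inE subformulas_refl orbT. Qed.

Lemma closure_next Y f : LNext f \in closure Y -> f \in closure Y.
Proof. by move/closure_subformulas; apply; rewrite /= inE subformulas_refl orbT. Qed.

Lemma closure_or Y f g : LOr f g \in closure Y -> f \in closure Y /\ g \in closure Y.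
Proof.
move/closure_subformulas=> cl.
by split; apply: cl; rewrite /= inE mem_cat subformulas_refl !orbT.
Qed.

Lemma closure_until Y f g : LUntil f g \in closure Y -> f \in closure Y /\ g \in closure Y.
Proof.
move/closure_subformulas=> cl.
by split; apply: cl; rewrite /= inE mem_cat subformulas_refl !orbT.
Qed.

End Closure.

Section Tableau.
Variables (AP : finType) (Y : seq (ltl AP)).
Implicit Types (w : trace AP) (f g psi : ltl AP).

Local Notation n := (size (closure Y)).

(* A tableau state assigns truth values to the closure, indexed by positions in [closure Y];
   [holds] reads them off, with junk value [false] outside the closure. *)
Definition valuation := {ffun 'I_n -> bool}.
Implicit Types (T : valuation).

Definition holds T psi : bool :=
  if insub (index psi (closure Y)) is Some k then T k else false.

Lemma index_closure_lt psi : psi \in closure Y -> index psi (closure Y) < n.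
Proof. by rewrite index_mem. Qed.

Lemma holdsE T psi (psi_cl : psi \in closure Y) :
  holds T psi = T (Ordinal (index_closure_lt psi_cl)).
Proof.
rewrite /holds; case: insubP => [k _ k_idx|]; last by rewrite index_closure_lt.
by congr (T _); apply: val_inj.
Qed.

Definition local_value T (a : {set AP}) T' psi : bool :=
  match psi with
  | LBot => false
  | LAtom p => p \in a
  | LNeg f => ~~ holds T f
  | LOr f g => holds T f || holds T g
  | LNext f => holds T' f
  | LUntil f g => holds T g || holds T f && holds T' (LUntil f g)
  end.

Definition consistent T a T' : bool :=
  [forall k : 'I_n, T k == local_value T a T' (nth LBot (closure Y) k)].

Lemma consistent_holds T a T' psi :
  consistent T a T' -> psi \in closure Y -> holds T psi = local_value T a T' psi.
Proof.
by move=> /forallP cons psi_cl; rewrite holdsE (eqP (cons _)) /= nth_index.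
Qed.

Definition fulfills T k : bool :=
  if nth LBot (closure Y) k is LUntil f g then ~~ holds T (LUntil f g) || holds T g
  else true.

Lemma fulfills_until T f g : LUntil f g \in closure Y ->
  fulfills T (index (LUntil f g) (closure Y)) = ~~ holds T (LUntil f g) || holds T g.
Proof. by move=> U_cl; rewrite /fulfills nth_index. Qed.

Definition fair (T : nat -> valuation) := forall k a, exists m, a <= m /\ fulfills (T m) k.

(* Degeneralization of the [n] fulfilment conditions: the counter waits at [c] until
   obligation [c] is fulfilled, and the value [n] marks a completed round. *)
Definition counter_step (c : 'I_n.+1) T : 'I_n.+1 :=
  if nat_of_ord c == n then inord 0 else if fulfills T c then inord c.+1 else c.

Definition tableau : buchi AP :=
  @Buchi AP (valuation * 'I_n.+1)%type
    [set q | (nat_of_ord q.2 == 0) && all (holds q.1) Y]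
    (fun q a q' => consistent q.1 a q'.1 && (q'.2 == counter_step q.2 q.1))
    [set q | nat_of_ord q.2 == n].

Lemma counter_stepE c T : nat_of_ord (counter_step c T) =
  if nat_of_ord c == n then 0 else if fulfills T c then c.+1 else c.
Proof.
rewrite /counter_step; case: eqP => [_|c_n]; first by rewrite inordK.
by case: ifP => // _; rewrite inordK //; have := ltn_ord c; lia.
Qed.

Section Counter.
Variables (T : nat -> valuation) (c : nat -> 'I_n.+1).
Hypothesis c_step : forall m, c m.+1 = counter_step (c m) (T m).

Lemma counter_passes k d a : c a <= k < c (a + d) ->
  exists m, a <= m < a + d /\ nat_of_ord (c m) = k /\ fulfills (T m) k.
Proof.
elim: d => [|d IH]; first by rewrite addn0; lia.
rewrite addnS c_step counter_stepE => /andP [ca_k].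
case: eqP => // _; case fad: (fulfills _ _) => k_lt.
  have [cad|cad] := eqVneq (nat_of_ord (c (a + d))) k.
    by exists (a + d); rewrite -cad; split=> //; lia.
  have [|m [am rest]] := IH; first by apply/andP; split=> //; lia.
  by exists m; split=> //; lia.
have [|m [am rest]] := IH; first exact/andP.
by exists m; split=> //; lia.
Qed.

Lemma fair_of_counter_top : (forall a, exists m, a <= m /\ nat_of_ord (c m) = n) -> fair T.
Proof.
move=> top k a; have [kn|nk] := ltnP k n; last by exists a; rewrite /fulfills nth_default.
have [m1 [am1 cm1]] := top a.
have [m2 [m12 cm2]] := top m1.+1.
have c0 : nat_of_ord (c m1.+1) = 0 by rewrite c_step counter_stepE cm1 eqxx.
have [|m [/andP [m1m _] [_ fm]]] := @counter_passes k (m2 - m1.+1) m1.+1.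
  by rewrite subnKC // c0 cm2; apply/andP.
by exists m; split=> //; lia.
Qed.

Lemma counter_climbs d a : c a < n -> fulfills (T (a + d)) (c a) ->
  exists2 m, a < m & nat_of_ord (c m) = (c a).+1.
Proof.
elim: d a => [|d IH] a ca_lt fad; have ca_n := ltn_eqF ca_lt.
all: case fa: (fulfills (T a) (c a));
  first by exists a.+1; rewrite // c_step counter_stepE ca_n fa.
  by rewrite addn0 fa in fad.
have ca1 : nat_of_ord (c a.+1) = c a by rewrite c_step counter_stepE ca_n fa.
have ca1_lt : c a.+1 < n by rewrite ca1.
have fd1 : fulfills (T (a.+1 + d)) (c a.+1) by rewrite ca1 addSnnS.
have [m am cm] := IH a.+1 ca1_lt fd1.
by exists m; [lia | rewrite cm ca1].
Qed.

Lemma counter_top_of_fair : fair T -> forall a, exists m, a <= m /\ nat_of_ord (c m) = n.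
Proof.
move=> fairT a; have /(_ (n - c a) a (leqnn _)) // : forall e a, n - c a <= e ->
    exists m, a <= m /\ nat_of_ord (c m) = n.
elim=> [|e IH] {}a e_bound; first by exists a; have := ltn_ord (c a); lia.
have [ca_n|ca_n] := eqVneq (nat_of_ord (c a)) n; first by exists a.
have ca_lt : c a < n by have := ltn_ord (c a); lia.
have [m0 [am0 fm0]] := fairT (c a) a.
rewrite -(subnKC am0) in fm0.
have [m am cm] := counter_climbs ca_lt fm0.
have [|m' [mm' cm']] := IH m; first lia.
by exists m'; split=> //; lia.
Qed.

End Counter.

Section Soundness.
Variables (w : trace AP) (T : nat -> valuation).
Hypothesis T_cons : forall i, consistent (T i) (w i) (T i.+1).

Lemma holds_until_fulfilled f g d i : LUntil f g \in closure Y ->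
  holds (T i) (LUntil f g) -> fulfills (T (i + d)) (index (LUntil f g) (closure Y)) ->
  exists k, i <= k /\ holds (T k) g /\ forall j, i <= j -> j < k -> holds (T j) f.
Proof.
move=> U_cl; elim: d i => [|d IH] i Ui.
  by rewrite addn0 fulfills_until // Ui => gi; exists i; split=> //; split=> // j ij ji; lia.
move: Ui; rewrite (consistent_holds (T_cons i) U_cl) /= => /orP [gi|/andP [fi Ui1]] fd.
  by exists i; split=> //; split=> // j ij ji; lia.
have [|k [ik [gk fk]]] := IH i.+1 Ui1; first by rewrite addSnnS.
exists k; split; first lia; split=> // j ij jk.
by have [ji|/fk] := leqP j i; [have -> : j = i by lia | apply].
Qed.

Lemma holds_until_of_witness f g d i : LUntil f g \in closure Y ->
  holds (T (i + d)) g -> (forall j, i <= j -> j < i + d -> holds (T j) f) ->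
  holds (T i) (LUntil f g).
Proof.
move=> U_cl; elim: d i => [|d IH] i gd fj; rewrite (consistent_holds (T_cons i) U_cl) /=.
  by rewrite -(addn0 i) gd.
apply/orP; right; apply/andP; split; first by apply: fj; lia.
by apply: IH; rewrite ?addSnnS // => j ij jd; apply: fj; lia.
Qed.

Lemma holds_sat : fair T ->
  forall psi, psi \in closure Y -> forall i, holds (T i) psi <-> sat_at w i psi.
Proof.
move=> fairT; elim=> [|p|f IH|f IHf g IHg|f IH|f IHf g IHg] psi_cl i; last first.
- have [f_cl g_cl] := closure_until psi_cl.
  split=> [Ui|[k [ik [gk fk]]]].
    have [m [im fm]] := fairT (index (LUntil f g) (closure Y)) i.
    rewrite -(subnKC im) in fm.
    have [k [ik [gk fk]]] := holds_until_fulfilled psi_cl Ui fm.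
    exists k; split=> //; split=> [|j ij jk]; first exact/IHg.
    by apply/IHf/fk.
  apply: (@holds_until_of_witness _ _ (k - i)); rewrite ?subnKC //; first exact/IHg.
  by move=> j ij jk; apply/IHf => //; apply: fk.
all: rewrite (consistent_holds (T_cons i) psi_cl) /=.
- exact: IH (closure_next psi_cl) i.+1.
- have [f_cl g_cl] := closure_or psi_cl.
  by rewrite -(IHf f_cl) -(IHg g_cl); split=> /orP.
- have f_cl := closure_neg psi_cl.
  by split=> [/negP nf /(IH f_cl)|nf]; last apply/negP => /(IH f_cl).
- by [].
- by split.
Qed.

End Soundness.

Definition truth w i : valuation :=
  [ffun k : 'I_n => `[< sat_at w i (nth LBot (closure Y) k) >]].

Lemma holds_truth w i psi :
  psi \in closure Y -> holds (truth w i) psi = `[< sat_at w i psi >].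
Proof. by move=> psi_cl; rewrite holdsE ffunE /= nth_index. Qed.

Lemma consistent_truth w i : consistent (truth w i) (w i) (truth w i.+1).
Proof.
apply/forallP => k; rewrite ffunE; apply/eqP.
have : nth LBot (closure Y) k \in closure Y by apply: mem_nth.
case: (nth LBot (closure Y) k) => [|p|f|f g|f|f g] psi_cl /=.
- exact: asboolF.
- exact: asboolb.
- by rewrite asbool_neg holds_truth // (closure_neg psi_cl).
- by have [f_cl g_cl] := closure_or psi_cl; rewrite asbool_or !holds_truth.
- by rewrite holds_truth // (closure_next psi_cl).
- have [f_cl g_cl] := closure_until psi_cl.
  by rewrite (asbool_equiv_eq (sat_at_untilE _ _ _ _)) asbool_or asbool_and !holds_truth.
Qed.

Lemma fair_truth w : fair (truth w).
Proof.
move=> k a; rewrite /fulfills.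
have [kn|nk] := ltnP k n; last by exists a; rewrite nth_default.
have : nth LBot (closure Y) k \in closure Y by apply: mem_nth.
case: (nth LBot (closure Y) k) => [|p|f|f g|f|f g] U_cl; try by exists a.
have g_cl := (closure_until U_cl).2.
have [[m [am [gm _]]]|notU] := pselect (sat_at w a (LUntil f g)).
  by exists m; split=> //; rewrite (holds_truth _ _ g_cl) (asboolT gm) orbT.
by exists a; split=> //; rewrite holds_truth // asboolF.
Qed.

Fixpoint counter_run (T : nat -> valuation) m : 'I_n.+1 :=
  if m is m'.+1 then counter_step (counter_run T m') (T m') else inord 0.

Lemma accepts_tableau w : accepts tableau w <-> forall psi, psi \in Y -> sat w psi.
Proof.
split=> [[r [r0 [run acc]]] psi psi_Y|satY].
  have cons_r i : consistent (r i).1 (w i) (r i.+1).1 by case/andP: (run i).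
  have step_r i : (r i.+1).2 = counter_step (r i).2 (r i).1 by case/andP: (run i) => _ /eqP.
  have fair_r : fair (fun i => (r i).1).
    apply: (fair_of_counter_top step_r) => a.
    by have [m [am]] := acc a; rewrite inE => /eqP; exists m.
  apply/(holds_sat cons_r fair_r (mem_closure psi_Y)).
  by move: r0; rewrite inE => /andP [_ /allP]; apply.
exists (fun m => (truth w m, counter_run (truth w) m)); split; [|split].
- rewrite inE /= inordK //; apply/allP => psi psi_Y.
  by rewrite holds_truth ?mem_closure //; apply/asboolT/satY.
- by move=> i; rewrite /= consistent_truth eqxx.
- move=> a; have [m [am cm]] :=
    counter_top_of_fair (c := counter_run (truth w)) (fun _ => erefl) (fair_truth w) a.
  by exists m; rewrite inE /= cm eqxx.
Qed.

End Tableau.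

Lemma CnLTL_supp_tableau (AP : finType) (X : seq (ltl AP)) phi :
  CnLTL X phi <-> supp (tableau X) phi.
Proof.
split=> [Cn_phi pi /accepts_tableau satX|supp_phi M MX pi tr]; last first.
  by apply/supp_phi/accepts_tableau => psi /In_mem psi_X; exact: MX psi psi_X pi tr.
apply: contrapT => not_phi.
have /accepts_lasso [i [j [ij]]] : accepts (tableau (LNeg phi :: X)) pi.
  by apply/accepts_tableau => psi; rewrite inE => /predU1P [->|/satX].
move/accepts_tableau => sat_lasso.
have /kmodels_lasso_kripke : kmodels (lasso_kripke ij pi) phi.
  apply: Cn_phi => psi /In_mem psi_X; apply/kmodels_lasso_kripke/sat_lasso.
  by rewrite inE psi_X orbT.
exact: (sat_lasso (LNeg phi) (mem_head _ _)).
Qed.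

Section KripkeAutomata.
Variable AP : finType.
Implicit Types (w : trace AP) (A : buchi AP) (M : kripke AP) (X : seq (kripke AP)).

Definition kripke_aut M : buchi AP :=
  @Buchi AP (kS M) (kI M) (fun s a s' => kT M s s' && (a == klab M s)) setT.

Definition empty_aut : buchi AP := @Buchi AP unit set0 (fun _ _ _ => true) set0.

Definition union_aut A1 A2 : buchi AP :=
  @Buchi AP (bQ A1 + bQ A2)%type
    [set q | match q with inl x => x \in bInit A1 | inr y => y \in bInit A2 end]
    (fun q a q' => match q, q' with
                   | inl x, inl x' => bDelta A1 x a x'
                   | inr y, inr y' => bDelta A2 y a y'
                   | _, _ => false
                   end)
    [set q | match q with inl x => x \in bAcc A1 | inr y => y \in bAcc A2 end].

Fixpoint kripkes_aut X : buchi AP :=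
  if X is M :: X' then union_aut (kripke_aut M) (kripkes_aut X') else empty_aut.

Lemma accepts_kripke_aut M w : accepts (kripke_aut M) w <-> ktrace M w.
Proof.
split=> [[r [r0 [run _]]]|[r [r0 [run lab_r]]]].
  by exists r; split=> //; split=> i; case/andP: (run i) => // _ /eqP.
exists r; split=> //; split=> [i|n]; first by rewrite /= run lab_r eqxx.
by exists n; rewrite inE.
Qed.

Lemma accepts_empty_aut w : ~ accepts empty_aut w.
Proof. by move=> [r [r0 _]]; rewrite inE in r0. Qed.

Lemma union_run_inl A1 A2 w (r : nat -> bQ (union_aut A1 A2)) x0 :
  (forall i, bDelta _ (r i) (w i) (r i.+1)) -> r 0 = inl x0 ->
  exists r1 : nat -> bQ A1, forall m, r m = inl (r1 m).
Proof.
move=> run r0; exists (fun m => if r m is inl x then x else x0).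
by elim=> [|m IH]; [rewrite r0 | move: (run m); rewrite IH; case: (r m.+1)].
Qed.

Lemma union_run_inr A1 A2 w (r : nat -> bQ (union_aut A1 A2)) y0 :
  (forall i, bDelta _ (r i) (w i) (r i.+1)) -> r 0 = inr y0 ->
  exists r2 : nat -> bQ A2, forall m, r m = inr (r2 m).
Proof.
move=> run r0; exists (fun m => if r m is inr y then y else y0).
by elim=> [|m IH]; [rewrite r0 | move: (run m); rewrite IH; case: (r m.+1)].
Qed.

Lemma accepts_union_aut A1 A2 w :
  accepts (union_aut A1 A2) w <-> accepts A1 w \/ accepts A2 w.
Proof.
split=> [[r [r0 [run acc]]]|[] [r [r0 [run acc]]]].
- case r0_eq: (r 0) => [x0|y0].
    have [r1 r_eq] := union_run_inl run r0_eq.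
    left; exists r1; split; first by move: r0; rewrite r_eq inE.
    split=> [i|n]; first by have := run i; rewrite !r_eq.
    by have [m [nm]] := acc n; rewrite r_eq inE; exists m.
  have [r2 r_eq] := union_run_inr run r0_eq.
  right; exists r2; split; first by move: r0; rewrite r_eq inE.
  split=> [i|n]; first by have := run i; rewrite !r_eq.
  by have [m [nm]] := acc n; rewrite r_eq inE; exists m.
- exists (inl \o r); split; first by rewrite inE.
  by split=> // n; have [m [nm accm]] := acc n; exists m; rewrite inE.
- exists (inr \o r); split; first by rewrite inE.
  by split=> // n; have [m [nm accm]] := acc n; exists m; rewrite inE.
Qed.

Lemma accepts_kripkes_aut X w :
  accepts (kripkes_aut X) w <-> exists M, List.In M X /\ ktrace M w.
Proof.
elim: X => [|M X IH] /=; first by split=> [/accepts_empty_aut|[M []]].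
rewrite accepts_union_aut accepts_kripke_aut IH; split.
  by case=> [tr|[M' [M'X tr]]]; [exists M; split; [left|] | exists M'; split; [right|]].
by case=> M' [[<-|M'X] tr]; [left | right; exists M'].
Qed.

Lemma kmodels_supp_kripkes_aut X phi :
  (forall M, List.In M X -> kmodels M phi) <-> supp (kripkes_aut X) phi.
Proof.
split=> [models_phi pi /accepts_kripkes_aut [M [MX tr]]|supp_phi M MX pi tr].
  exact: models_phi tr.
by apply/supp_phi/accepts_kripkes_aut; exists M.
Qed.

Definition total_states X := sumn [seq #|kS M| | M <- X].

Lemma card_states_le_total X M : List.In M X -> #|kS M| <= total_states X.
Proof.
elim: X => [|M' X IH] //= [<-|MX]; first exact: leq_addr.
exact: leq_trans (IH MX) (leq_addl _ _).
Qed.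

End KripkeAutomata.

Section EvenPulse.
Variables (AP : finType) (p : AP).
Implicit Types (pi : trace AP) (f g phi psi : ltl AP).

Definition pulse k : trace AP := fun m => if m == k then [set p] else set0.

(* [Some b]: the pulse is still to come and [b] is the parity of the current position;
   [None]: the pulse is over. *)
Definition even_pulse_delta (q : option bool) (a : {set AP}) (q' : option bool) : bool :=
  match q, q' with
  | Some b, Some b' => (a == set0) && (b' == ~~ b)
  | Some b, None => ~~ b && (a == [set p])
  | None, None => a == set0
  | None, Some _ => false
  end.

Definition even_pulse_aut : buchi AP :=
  @Buchi AP (option bool) [set Some false] even_pulse_delta [set None].

Section EvenPulseRun.
Variables (pi : trace AP) (r : nat -> option bool).
Hypothesis r0 : r 0 = Some false.
Hypothesis run : forall i, even_pulse_delta (r i) (pi i) (r i.+1).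

Lemma even_pulse_run_none m : r m = None -> r m.+1 = None /\ pi m = set0.
Proof. by move=> rm; move: (run m); rewrite rm; case: (r m.+1) => // /eqP. Qed.

Lemma even_pulse_run_after m : r m = None -> forall d, pi (m + d) = set0.
Proof.
move=> rm d; suff [] : r (m + d) = None /\ pi (m + d) = set0 by [].
elim: d => [|d [rd _]]; first by rewrite addn0 rm (even_pulse_run_none rm).2.
have [rd1 _] := even_pulse_run_none rd.
by rewrite addnS rd1 (even_pulse_run_none rd1).2.
Qed.

Lemma even_pulse_run_before m : r m <> None ->
  r m = Some (odd m) /\ forall k, k < m -> pi k = set0.
Proof.
elim: m => [|m IH] rm; first by rewrite r0.
move: (run m) rm; case rm_eq: (r m) => [b|]; last by case: (r m.+1).
case: (r m.+1) => [b'|] // /andP [/eqP pim /eqP b'b] _.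
have /IH [] : r m <> None by rewrite rm_eq.
rewrite rm_eq => -[bm] pi0; split; first by rewrite b'b bm.
by move=> k; rewrite ltnS leq_eqVlt => /predU1P [->|/pi0].
Qed.

End EvenPulseRun.

Lemma accepts_even_pulse pi : accepts even_pulse_aut pi <-> exists n, pi =1 pulse (2 * n).
Proof.
split=> [[r [r0 [run acc]]]|[n pi_n]]; last first.
  exists (fun m => if m <= 2 * n then Some (odd m) else None); split; [|split].
  - by rewrite inE.
  - move=> m; rewrite /= /even_pulse_delta pi_n /pulse.
    by case: (ltngtP m (2 * n)) => [mn|nm|->]; rewrite ?eqxx ?mul2n ?odd_double.
  - move=> k; exists (k + 2 * n + 1); split; first lia.
    by rewrite (_ : (_ <= _) = false) ?inE //; lia.
move: r0; rewrite inE => /eqP r0.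
have exN : exists m, r m == None by have [m [_]] := acc 0; rewrite inE; exists m.
case: (ex_minnP exN) => n0 /eqP rn0 n0_min.
have n0_gt0 : 0 < n0 by move: rn0; case: (n0) => //; rewrite r0.
have /(even_pulse_run_before r0 run) [rp pi_before] : r n0.-1 <> None.
  by move=> /eqP /n0_min; lia.
have := run n0.-1; rewrite rp prednK // rn0 => /andP [even_n0 /eqP pi_p].
exists n0.-1./2 => m.
have -> : 2 * n0.-1./2 = n0.-1.
  by have := odd_double_half n0.-1; rewrite (negbTE even_n0) add0n mul2n.
rewrite /pulse; case: (ltngtP m n0.-1) => [mn|nm|->] //; first exact: pi_before.
by rewrite (_ : m = n0 + (m - n0)) ?(even_pulse_run_after run rn0) //; lia.
Qed.

Lemma supp_even_pulse phi : supp even_pulse_aut phi <-> forall n, sat (pulse (2 * n)) phi.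
Proof.
split=> [supp_phi n|sat_phi pi /accepts_even_pulse [n pi_n]].
  by apply/supp_phi/accepts_even_pulse; exists n.
exact/(sat_ext phi pi_n).
Qed.

Lemma pulse_succ k m : pulse k.+1 m.+1 = pulse k m.
Proof. by rewrite /pulse eqSS. Qed.

Lemma sat_pulse_next k f : sat (pulse k.+1) (LNext f) <-> sat (pulse k) f.
Proof. exact: (sat_at_shift (pulse_succ k) f 0). Qed.

Lemma sat_pulse_until k f g : sat (pulse k.+1) (LUntil f g) <->
  sat (pulse k.+1) g \/ sat (pulse k.+1) f /\ sat (pulse k) (LUntil f g).
Proof. by rewrite /sat sat_at_untilE (sat_at_shift (pulse_succ k) (LUntil f g) 0). Qed.

Definition stable_from psi N := forall k, N <= k -> sat (pulse k) psi <-> sat (pulse N) psi.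

Lemma stable_from_le psi N N' : N <= N' -> stable_from psi N -> stable_from psi N'.
Proof. by move=> NN' st k N'k; rewrite (st k) ?(st N') //; exact: leq_trans N'k. Qed.

Lemma sat_pulse_stable psi : exists N, stable_from psi N.
Proof.
elim: psi => [|q|f [N st]|f [Nf stf] g [Ng stg]|f [N st]|f [Nf stf] g [Ng stg]].
- by exists 0.
- by exists 1 => k k_gt0; rewrite /sat /= /pulse (_ : (0 == k) = false) //; lia.
- by exists N => k /st; rewrite /sat /=; tauto.
- have stf' := stable_from_le (leq_maxl Nf Ng) stf.
  have stg' := stable_from_le (leq_maxr Nf Ng) stg.
  by exists (maxn Nf Ng) => k /[dup] /stf' + /stg'; rewrite /sat /=; tauto.
- by exists N.+1 => -[|k] // Nk; rewrite !sat_pulse_next; exact: st.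
- set M := maxn Nf Ng.
  have stf' := stable_from_le (leq_maxl Nf Ng) stf.
  have stg' := stable_from_le (leq_maxr Nf Ng) stg.
  exists M.+1.
  suff st d : sat (pulse (M.+1 + d)) (LUntil f g) <-> sat (pulse M.+1) (LUntil f g).
    by move=> k Mk; rewrite -(subnKC Mk) st.
  elim: d => [|d IH]; first by rewrite addn0.
  rewrite addnS sat_pulse_until IH (stf' (M.+1 + d).+1) ?(stg' (M.+1 + d).+1); try lia.
  by rewrite sat_pulse_until (stf' M.+1) ?(stg' M.+1) //; tauto.
Qed.

Lemma sat_pulse_stable_seq (X : seq (ltl AP)) :
  exists N, forall psi, List.In psi X -> stable_from psi N.
Proof.
elim: X => [|psi X [N stX]]; first by exists 0.
have [Npsi st] := sat_pulse_stable psi.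
exists (maxn Npsi N) => chi [<-|chi_X]; first exact: stable_from_le (leq_maxl _ _) st.
exact: stable_from_le (leq_maxr _ _) (stX chi chi_X).
Qed.

Lemma pulse_lasso k m : pulse k (lasso k.+1 k.+1 m) = pulse k m.
Proof.
rewrite lasso_diag /pulse; have [//|km] := leqP m k.+1.
by do 2 case: eqP => //; lia.
Qed.

Definition pulse_kripke k : kripke AP := lasso_kripke (leqnn k.+1) (pulse k).

Lemma kmodels_pulse_kripke k psi : kmodels (pulse_kripke k) psi <-> sat (pulse k) psi.
Proof. by rewrite kmodels_lasso_kripke; apply: sat_ext => m; exact: pulse_lasso. Qed.

(* Every formula eventually stops distinguishing the pulses, so a finite base cannot
   separate an even pulse from a late odd one. *)
Lemma even_pulse_not_base : ~ E_base (supp even_pulse_aut).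
Proof.
move=> [X X_supp].
have sat_X psi : List.In psi X -> forall n, sat (pulse (2 * n)) psi.
  by move=> psi_X; apply/supp_even_pulse/X_supp => M; apply.
have [N stX] := sat_pulse_stable_seq X.
have sat_odd psi : List.In psi X -> sat (pulse (2 * N).+1) psi.
  move=> psi_X; have st := stX psi psi_X.
  by rewrite (st (2 * N).+1) -?(st (2 * N)); [apply: sat_X | lia..].
pose phi := LNeg (nextn (2 * N).+1 (LAtom p)).
have phi_E : supp even_pulse_aut phi.
  apply/supp_even_pulse => n; rewrite /sat /= sat_at_nextn /= /pulse.
  by case: eqP => [|_]; [lia | rewrite inE].
have /kmodels_pulse_kripke : kmodels (pulse_kripke (2 * N).+1) phi.
  apply: ((X_supp phi).1 phi_E (pulse_kripke _)) => psi psi_X.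
  exact/kmodels_pulse_kripke/sat_odd.
by rewrite /sat /= sat_at_nextn /= /pulse eqxx inE; apply.
Qed.

(* A Kripke structure that must show [p] on every trace must do so before it has
   exhausted its states, so finitely many of them bound the position of the pulse. *)
Lemma even_pulse_not_models : ~ E_models (supp even_pulse_aut).
Proof.
move=> [X X_supp].
have ev_X : forall M, List.In M X -> kmodels M (eventually p).
  apply/X_supp/supp_even_pulse => n; apply/sat_eventually; exists (2 * n).
  by rewrite /pulse eqxx inE.
have within_X : supp even_pulse_aut (within p (total_states X)).
  apply/X_supp => M MX pi /(kmodels_within (ev_X M MX)) /sat_at_within [k kM pk].
  by apply/sat_at_within; exists k => //; apply: leq_trans kM (card_states_le_total MX).
have /sat_at_within [k kX] := (supp_even_pulse _).1 within_X (total_states X).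
by rewrite /pulse add0n; case: eqP => [|_]; [lia | rewrite inE].
Qed.

End EvenPulse.

Lemma E_base_Buchi (AP : finType) (E : ltl AP -> Prop) : E_base E -> E_Buchi E.
Proof. by move=> [X X_E]; exists (tableau X) => phi; rewrite X_E CnLTL_supp_tableau. Qed.

Lemma E_models_Buchi (AP : finType) (E : ltl AP -> Prop) : E_models E -> E_Buchi E.
Proof.
by move=> [X X_E]; exists (kripkes_aut X) => phi; rewrite X_E kmodels_supp_kripkes_aut.
Qed.

Theorem mainTheorem15 (AP : finType) (HAP : 0 < #|AP|) :
  (forall E : ltl AP -> Prop, E_base E \/ E_models E -> E_Buchi E) /\
  (exists E : ltl AP -> Prop, E_Buchi E /\ ~ (E_base E \/ E_models E)).
Proof.
split=> [E [/E_base_Buchi|/E_models_Buchi] //|].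
have /card_gt0P [p _] := HAP.
exists (supp (even_pulse_aut p)); split; first by exists (even_pulse_aut p).
by case; [exact: even_pulse_not_base | exact: even_pulse_not_models].
Qed.
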